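(* Let $\mathcal T$ be a type theory. (1) If $B\vdash^{\mathcal T}_{\equiv}\Delta_1:\sigma$ and $\Delta_1\to^\parallel\Delta_2$, then $B\vdash^{\mathcal T}_{\equiv}\Delta_2:\sigma$. (2) For $\mathcal R\in\{=_\beta,=_{\beta\eta}\}$: if $B\vdash^{\mathcal T}_{\mathcal R}\Delta_1:\sigma$ and $\Delta_1\to\Delta_2$, then $B\vdash^{\mathcal T}_{\mathcal R}\Delta_2:\sigma$.
   Context: Type atoms: a set $\mathbb{A}$ of symbols; $\omega$ denotes a distinguished atom (the universal type). Intersection types over $\mathbb A$: $\sigma::= a\mid\sigma\to\sigma\mid\sigma\cap\sigma$ ($a\in\mathbb A$). An intersection type theory $\mathcal T$ over $\mathbb A$ is a set of inequalities $\sigma\le\tau$ (written $\sigma\le_{\mathcal T}\tau$) closed under (refl) $\sigma\le\sigma$; (incl) $\sigma\cap\tau\le\sigma$ and $\sigma\cap\tau\le\tau$; (glb) $\rho\le\sigma$ and $\rho\le\tau$ imply $\rho\le\sigma\cap\tau$; (trans) $\sigma\le\tau$ and $\tau\le\rho$ imply $\sigma\le\rho$. $\Delta$-terms: $\Delta::=u_\Delta\mid x\mid\lambda x{:}\sigma.\Delta\mid\Delta\,\Delta\mid\langle\Delta,\Delta\rangle\mid pr_1\Delta\mid pr_2\Delta\mid\Delta^\sigma$, where for every (not necessarily typable) $\Delta$-term $\Delta$ there is a constant $u_\Delta$. The essence $\|\Delta\|$ is the pure $\lambda$-term defined by $\|x\|=x$, $\|u_\Delta\|=\|\Delta\|$,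 $\|\Delta^\sigma\|=\|\Delta\|$, $\|\lambda x{:}\sigma.\Delta\|=\lambda x.\|\Delta\|$, $\|\Delta_1\Delta_2\|=\|\Delta_1\|\,\|\Delta_2\|$, $\|\langle\Delta_1,\Delta_2\rangle\|=\|\Delta_1\|$, $\|pr_i\Delta\|=\|\Delta\|$. Let $\mathcal R$ be one of $\equiv$ (syntactic identity up to $\alpha$), $=_\beta$, $=_{\beta\eta}$ on pure $\lambda$-terms. A basis $B$ is a finite set of declarations $x{:}\sigma$ with distinct variables. The typed system $\Delta^{\mathcal T}_{\mathcal R}$ derives $B\vdash^{\mathcal T}_{\mathcal R}\Delta:\sigma$ by: (top) $B\vdash u_\Delta:\omega$ if $\omega\in\mathbb A$; (ax) $B\vdash x:\sigma$ if $x{:}\sigma\in B$; ($\to$I) from $B,x{:}\sigma\vdash\Delta:\tau$ infer $B\vdash\lambda x{:}\sigma.\Delta:\sigma\to\tau$; ($\to$E) from $B\vdash\Delta_1:\sigma\to\tau$ and $B\vdash\Delta_2:\sigma$ infer $B\vdash\Delta_1\Delta_2:\tau$; ($\cap$I) from $B\vdash\Delta_1:\sigma$, $B\vdash\Delta_2:\tau$ and $\|\Delta_1\|\mathrel{\mathcal R}\|\Delta_2\|$ infer $B\vdash\langle\Delta_1,\Delta_2\rangle:\sigma\cap\tau$; ($\cap$E$_1$) from $B\vdash\Delta:\sigma\cap\tau$ infer $B\vdash pr_1\Delta:\sigma$; ($\cap$E$_2$) from $B\vdash\Delta:\sigma\cap\tau$ infer $B\vdash pr_2\Delta:\tau$;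 ($\le_{\mathcal T}$) from $B\vdash\Delta:\sigma$ and $\sigma\le_{\mathcal T}\tau$ infer $B\vdash\Delta^\tau:\tau$. Substitution $\Delta_1[\Delta_2/x]$ is capture-avoiding, with $u_{\Delta_1}[\Delta_2/x]=u_{\Delta_1[\Delta_2/x]}$ and $(\Delta_1^\sigma)[\Delta_2/x]=(\Delta_1[\Delta_2/x])^\sigma$. Notions of reduction: $(\beta)$ $(\lambda x{:}\sigma.\Delta_1)\Delta_2\to\Delta_1[\Delta_2/x]$; $(pr_i)$ $pr_i\langle\Delta_1,\Delta_2\rangle\to\Delta_i$ ($i=1,2$). ($(\lambda x{:}\sigma.\Delta_1)^\tau\Delta_2$ is not a redex.) $\to$ denotes the contextual closure of $(\beta)$ and $(pr_i)$, where no reduction is performed inside the index $\Delta$ of a constant $u_\Delta$. The synchronous reduction $\to^\parallel$ is defined as the contextual closure of $(\beta)$ and $(pr_i)$ except that a strong pair reduces only by the rule: $\langle\Delta_1,\Delta_2\rangle\to^\parallel\langle\Delta_1',\Delta_2'\rangle$ whenever $\Delta_1\to^\parallel\Delta_1'$, $\Delta_2\to^\parallel\Delta_2'$ and $\|\Delta_1'\|\equiv\|\Delta_2'\|$. *)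

(* De Bruijn encoding of lambda-terms and Delta-terms
   (alpha-equivalence = syntactic equality). *)
From Stdlib Require Import Arith List Relations.
Import ListNotations.
Set Implicit Arguments.

Inductive ty (A : Type) : Type :=
| TAtom : A -> ty A
| TArr : ty A -> ty A -> ty A
| TInter : ty A -> ty A -> ty A.
Arguments TAtom {A} _.
Arguments TArr {A} _ _.
Arguments TInter {A} _ _.

Definition is_type_theory (A : Type) (le : ty A -> ty A -> Prop) : Prop :=
  (forall s, le s s) /\
  (forall s t, le (TInter s t) s) /\
  (forall s t, le (TInter s t) t) /\
  (forall r s t, le r s -> le r t -> le r (TInter s t)) /\
  (forall s t r, le s t -> le t r -> le s r).

Inductive lterm : Type :=
| LVar : nat -> lterm
| LLam : lterm -> lterm
| LApp : lterm -> lterm -> lterm.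

Fixpoint llift (k n : nat) (t : lterm) : lterm :=
  match t with
  | LVar i => if Nat.ltb i k then LVar i else LVar (i + n)
  | LLam b => LLam (llift (S k) n b)
  | LApp t1 t2 => LApp (llift k n t1) (llift k n t2)
  end.

Fixpoint lsubst (k : nat) (u : lterm) (t : lterm) : lterm :=
  match t with
  | LVar i =>
      if Nat.eqb i k then llift 0 k u
      else if Nat.ltb k i then LVar (pred i) else LVar i
  | LLam b => LLam (lsubst (S k) u b)
  | LApp t1 t2 => LApp (lsubst k u t1) (lsubst k u t2)
  end.

Inductive lbeta : lterm -> lterm -> Prop :=
| lbeta_redex : forall b u, lbeta (LApp (LLam b) u) (lsubst 0 u b)
| lbeta_lam : forall b b', lbeta b b' -> lbeta (LLam b) (LLam b')
| lbeta_appl : forall t t' u, lbeta t t' -> lbeta (LApp t u) (LApp t' u)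
| lbeta_appr : forall t u u', lbeta u u' -> lbeta (LApp t u) (LApp t u').

Inductive lbetaeta : lterm -> lterm -> Prop :=
| lbe_beta : forall b u, lbetaeta (LApp (LLam b) u) (lsubst 0 u b)
| lbe_eta : forall t, lbetaeta (LLam (LApp (llift 0 1 t) (LVar 0))) t
| lbe_lam : forall b b', lbetaeta b b' -> lbetaeta (LLam b) (LLam b')
| lbe_appl : forall t t' u, lbetaeta t t' -> lbetaeta (LApp t u) (LApp t' u)
| lbe_appr : forall t u u', lbetaeta u u' -> lbetaeta (LApp t u) (LApp t u').

Inductive rel_kind : Type := Syn | Beta | BetaEta.

Definition Rel (k : rel_kind) : lterm -> lterm -> Prop :=
  match k with
  | Syn => @eq lterm
  | Beta => clos_refl_sym_trans lterm lbeta
  | BetaEta => clos_refl_sym_trans lterm lbetaeta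
  end.

Inductive dterm (A : Type) : Type :=
| DU : dterm A -> dterm A
| DVar : nat -> dterm A
| DLam : ty A -> dterm A -> dterm A
| DApp : dterm A -> dterm A -> dterm A
| DPair : dterm A -> dterm A -> dterm A
| DPr1 : dterm A -> dterm A
| DPr2 : dterm A -> dterm A
| DCoe : dterm A -> ty A -> dterm A.
Arguments DU {A} _.
Arguments DVar {A} _.
Arguments DLam {A} _ _.
Arguments DApp {A} _ _.
Arguments DPair {A} _ _.
Arguments DPr1 {A} _.
Arguments DPr2 {A} _.
Arguments DCoe {A} _ _.

Fixpoint dlift (A : Type) (k n : nat) (d : dterm A) : dterm A :=
  match d with
  | DU e => DU (dlift k n e)
  | DVar i => if Nat.ltb i k then DVar i else DVar (i + n)
  | DLam s b => DLam s (dlift (S k) n b)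
  | DApp d1 d2 => DApp (dlift k n d1) (dlift k n d2)
  | DPair d1 d2 => DPair (dlift k n d1) (dlift k n d2)
  | DPr1 e => DPr1 (dlift k n e)
  | DPr2 e => DPr2 (dlift k n e)
  | DCoe e s => DCoe (dlift k n e) s
  end.

Fixpoint dsubst (A : Type) (k : nat) (u : dterm A) (d : dterm A) : dterm A :=
  match d with
  | DU e => DU (dsubst k u e)
  | DVar i =>
      if Nat.eqb i k then dlift 0 k u
      else if Nat.ltb k i then DVar (pred i) else DVar i
  | DLam s b => DLam s (dsubst (S k) u b)
  | DApp d1 d2 => DApp (dsubst k u d1) (dsubst k u d2)
  | DPair d1 d2 => DPair (dsubst k u d1) (dsubst k u d2)
  | DPr1 e => DPr1 (dsubst k u e)
  | DPr2 e => DPr2 (dsubst k u e)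
  | DCoe e s => DCoe (dsubst k u e) s
  end.

Fixpoint ess (A : Type) (d : dterm A) : lterm :=
  match d with
  | DU e => ess e
  | DVar i => LVar i
  | DLam _ b => LLam (ess b)
  | DApp d1 d2 => LApp (ess d1) (ess d2)
  | DPair d1 _ => ess d1
  | DPr1 e => ess e
  | DPr2 e => ess e
  | DCoe e _ => ess e
  end.

(* ---------- The typed system Delta^T_R ----------
   om = Some w means the universal atom omega (= w) belongs to the atoms;
   om = None means omega is not an atom. A basis is a de Bruijn context. *)
Inductive typed (A : Type) (om : option A) (le : ty A -> ty A -> Prop)
          (k : rel_kind) : list (ty A) -> dterm A -> ty A -> Prop :=
| t_top : forall B e w, om = Some w -> typed om le k B (DU e) (TAtom w)
| t_ax : forall B x s, nth_error B x = Some s -> typed om le k B (DVar x) s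
| t_arrI : forall B s t b, typed om le k (s :: B) b t ->
    typed om le k B (DLam s b) (TArr s t)
| t_arrE : forall B s t d1 d2, typed om le k B d1 (TArr s t) ->
    typed om le k B d2 s -> typed om le k B (DApp d1 d2) t
| t_capI : forall B s t d1 d2, typed om le k B d1 s -> typed om le k B d2 t ->
    Rel k (ess d1) (ess d2) -> typed om le k B (DPair d1 d2) (TInter s t)
| t_capE1 : forall B s t d, typed om le k B d (TInter s t) ->
    typed om le k B (DPr1 d) s
| t_capE2 : forall B s t d, typed om le k B d (TInter s t) ->
    typed om le k B (DPr2 d) t
| t_le : forall B s t d, typed om le k B d s -> le s t ->
    typed om le k B (DCoe d t) t.

(* ordinary reduction: contextual closure of beta and pr_i,
   no reduction inside u_Delta *)
Inductive dstep (A : Type) : dterm A -> dterm A -> Prop :=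
| ds_beta : forall s b u, dstep (DApp (DLam s b) u) (dsubst 0 u b)
| ds_pr1 : forall d1 d2, dstep (DPr1 (DPair d1 d2)) d1
| ds_pr2 : forall d1 d2, dstep (DPr2 (DPair d1 d2)) d2
| ds_lam : forall s b b', dstep b b' -> dstep (DLam s b) (DLam s b')
| ds_appl : forall d d' u, dstep d d' -> dstep (DApp d u) (DApp d' u)
| ds_appr : forall d u u', dstep u u' -> dstep (DApp d u) (DApp d u')
| ds_pairl : forall d d' e, dstep d d' -> dstep (DPair d e) (DPair d' e)
| ds_pairr : forall d e e', dstep e e' -> dstep (DPair d e) (DPair d e')
| ds_pr1c : forall d d', dstep d d' -> dstep (DPr1 d) (DPr1 d')
| ds_pr2c : forall d d', dstep d d' -> dstep (DPr2 d) (DPr2 d')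
| ds_coe : forall d d' s, dstep d d' -> dstep (DCoe d s) (DCoe d' s).

Inductive pstep (A : Type) : dterm A -> dterm A -> Prop :=
| ps_beta : forall s b u, pstep (DApp (DLam s b) u) (dsubst 0 u b)
| ps_pr1 : forall d1 d2, pstep (DPr1 (DPair d1 d2)) d1
| ps_pr2 : forall d1 d2, pstep (DPr2 (DPair d1 d2)) d2
| ps_lam : forall s b b', pstep b b' -> pstep (DLam s b) (DLam s b')
| ps_appl : forall d d' u, pstep d d' -> pstep (DApp d u) (DApp d' u)
| ps_appr : forall d u u', pstep u u' -> pstep (DApp d u) (DApp d u')
| ps_pair : forall d d' e e', pstep d d' -> pstep e e' -> ess d' = ess e' ->
    pstep (DPair d e) (DPair d' e')
| ps_pr1c : forall d d', pstep d d' -> pstep (DPr1 d) (DPr1 d')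
| ps_pr2c : forall d d', pstep d d' -> pstep (DPr2 d) (DPr2 d')
| ps_coe : forall d d' s, pstep d d' -> pstep (DCoe d s) (DCoe d' s).

(* Subject reduction follows the usual route: weakening and the substitution
   lemma handle the beta-redex, and the projection redexes are typed by the
   premises of the pair.  The only new point is the side condition
   [R (ess d1) (ess d2)] of a pair that survives a reduction step.  Under
   synchronous reduction both components end with identical essences, so it
   holds for every R.  Under ordinary reduction one component moves alone; its
   essence changes by at most one beta-step, or, for a [pr2] redex, by a
   conversion already recorded in the typing of the pair, so the condition
   persists whenever R contains beta-conversion. *)
From Pilot Require Import Defs.
From Stdlib Require Import Arith List Relations Lia.

Ltac index_cases := repeat (simpl; match goal with
  | |- context [Nat.ltb ?a ?b] => destruct (Nat.ltb_spec a b)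
  | |- context [Nat.eqb ?a ?b] => destruct (Nat.eqb_spec a b) end);
  try (f_equal; lia); try lia.

Lemma llift_llift t : forall j m k n, j <= k -> k <= j + m ->
  llift k n (llift j m t) = llift j (m + n) t.
Proof.
  induction t as [i|t IHt|t1 IHt1 t2 IHt2]; intros j m k n Hjk Hkm; simpl.
  - index_cases.
  - f_equal; apply IHt; lia.
  - f_equal; auto.
Qed.

Lemma llift_comm t : forall j m k n, j <= k ->
  llift (k + m) n (llift j m t) = llift j m (llift k n t).
Proof.
  induction t as [i|t IHt|t1 IHt1 t2 IHt2]; intros j m k n Hjk; simpl.
  - index_cases.
  - f_equal. replace (S (k + m)) with (S k + m) by lia. apply IHt; lia.
  - f_equal; auto.
Qed.

Lemma llift_lsubst t : forall j k n u, j <= k ->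
  llift k n (lsubst j u t) = lsubst j (llift (k - j) n u) (llift (S k) n t).
Proof.
  induction t as [i|t IHt|t1 IHt1 t2 IHt2]; intros j k n u Hjk; simpl.
  - index_cases. replace k with (k - j + j) at 1 by lia. apply llift_comm; lia.
  - f_equal. apply (IHt (S j) (S k)); lia.
  - f_equal; auto.
Qed.

Lemma lsubst_llift_cancel t : forall j n k u, j <= k -> k <= j + n ->
  lsubst k u (llift j (S n) t) = llift j n t.
Proof.
  induction t as [i|t IHt|t1 IHt1 t2 IHt2]; intros j n k u Hjk Hkn; simpl.
  - index_cases.
  - f_equal; apply IHt; lia.
  - f_equal; auto.
Qed.

Lemma lsubst_llift_comm t : forall k n j u, k <= j ->
  lsubst (j + n) u (llift k n t) = llift k n (lsubst j u t).
Proof.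
  induction t as [i|t IHt|t1 IHt1 t2 IHt2]; intros k n j u Hkj; simpl.
  - index_cases. subst. rewrite llift_llift by lia. f_equal; lia.
  - f_equal. apply (IHt (S k) n (S j)); lia.
  - f_equal; auto.
Qed.

Lemma lsubst_lsubst t : forall j k u v,
  lsubst (j + k) u (lsubst j v t) = lsubst j (lsubst k u v) (lsubst (S (j + k)) u t).
Proof.
  induction t as [i|t IHt|t1 IHt1 t2 IHt2]; intros j k u v; simpl.
  - index_cases.
    + subst. rewrite lsubst_llift_cancel by lia. reflexivity.
    + subst. rewrite Nat.add_comm. apply lsubst_llift_comm; lia.
  - f_equal. apply (IHt (S j)).
  - f_equal; auto.
Qed.

Lemma lbeta_llift t t' : lbeta t t' -> forall k n, lbeta (llift k n t) (llift k n t').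
Proof.
  induction 1; intros k n; simpl; try (constructor; auto; fail).
  rewrite llift_lsubst, Nat.sub_0_r by lia. constructor.
Qed.

Lemma lbetaeta_llift t t' : lbetaeta t t' -> forall k n, lbetaeta (llift k n t) (llift k n t').
Proof.
  induction 1; intros k n; simpl; try (constructor; auto; fail).
  - rewrite llift_lsubst, Nat.sub_0_r by lia. constructor.
  - replace (S k) with (k + 1) by lia. rewrite llift_comm by lia. constructor.
Qed.

Lemma lbeta_lsubst t t' : lbeta t t' -> forall k u, lbeta (lsubst k u t) (lsubst k u t').
Proof.
  induction 1; intros k v; simpl; try (constructor; auto; fail).
  pose proof (lsubst_lsubst b 0 k v u) as E; simpl in E; rewrite E. constructor.
Qed.

Lemma lbetaeta_lsubst t t' : lbetaeta t t' -> forall k u, lbetaeta (lsubst k u t) (lsubst k u t').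
Proof.
  induction 1; intros k v; simpl; try (constructor; auto; fail).
  - pose proof (lsubst_lsubst b 0 k v u) as E; simpl in E; rewrite E. constructor.
  - replace (S k) with (k + 1) by lia. rewrite lsubst_llift_comm by lia. constructor.
Qed.

Lemma lbeta_lbetaeta t t' : lbeta t t' -> lbetaeta t t'.
Proof. induction 1; constructor; auto. Qed.

Section Conversion.
Variable k : rel_kind.

Lemma Rel_refl t : Rel k t t.
Proof. destruct k; simpl; [reflexivity | apply rst_refl | apply rst_refl]. Qed.

Lemma Rel_sym t t' : Rel k t t' -> Rel k t' t.
Proof. destruct k; simpl; [auto | apply rst_sym | apply rst_sym]. Qed.

Lemma Rel_trans t t' t'' : Rel k t t' -> Rel k t' t'' -> Rel k t t''.
Proof. destruct k; simpl; [congruence | apply rst_trans | apply rst_trans]. Qed.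

Lemma Rel_congr (f : lterm -> lterm) :
  (forall t t', lbeta t t' -> lbeta (f t) (f t')) ->
  (forall t t', lbetaeta t t' -> lbetaeta (f t) (f t')) ->
  forall t t', Rel k t t' -> Rel k (f t) (f t').
Proof.
  intros Hb Hbe t t' H; destruct k; simpl in *.
  - congruence.
  - induction H; eauto using clos_refl_sym_trans.
  - induction H; eauto using clos_refl_sym_trans.
Qed.

Lemma Rel_llift t t' n m : Rel k t t' -> Rel k (llift n m t) (llift n m t').
Proof. apply Rel_congr; auto using lbeta_llift, lbetaeta_llift. Qed.

Lemma Rel_lsubst t t' n u : Rel k t t' -> Rel k (lsubst n u t) (lsubst n u t').
Proof. apply Rel_congr; auto using lbeta_lsubst, lbetaeta_lsubst. Qed.

Lemma Rel_LLam t t' : Rel k t t' -> Rel k (LLam t) (LLam t').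
Proof. apply Rel_congr; auto using lbeta, lbetaeta. Qed.

Lemma Rel_LAppl t t' u : Rel k t t' -> Rel k (LApp t u) (LApp t' u).
Proof. apply (Rel_congr (fun t => LApp t u)); auto using lbeta, lbetaeta. Qed.

Lemma Rel_LAppr t u u' : Rel k u u' -> Rel k (LApp t u) (LApp t u').
Proof. apply Rel_congr; auto using lbeta, lbetaeta. Qed.

Lemma Rel_lbeta t t' : k <> Syn -> lbeta t t' -> Rel k t t'.
Proof.
  intros Hk H; destruct k; simpl; [congruence | |]; apply rst_step;
    auto using lbeta_lbetaeta.
Qed.

End Conversion.

Lemma ess_dlift A (d : dterm A) : forall k n, ess (dlift k n d) = llift k n (ess d).
Proof.
  induction d; intros; simpl; try congruence.
  destruct (Nat.ltb n k); reflexivity.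
Qed.

Lemma ess_dsubst A (d : dterm A) : forall k u, ess (dsubst k u d) = lsubst k (ess u) (ess d).
Proof.
  induction d; intros; simpl; try congruence.
  destruct (Nat.eqb n k); [apply ess_dlift |].
  destruct (Nat.ltb k n); reflexivity.
Qed.

Section Typing.
Variables (A : Type) (om : option A) (le : ty A -> ty A -> Prop) (k : rel_kind).
Local Notation typed := (Defs.typed om le k).

Lemma typed_weaken G1 G2 G3 d t : typed (G1 ++ G2) d t ->
  typed (G1 ++ G3 ++ G2) (dlift (length G1) (length G3) d) t.
Proof.
  remember (G1 ++ G2) as B eqn:EB; intros Ht; revert G1 EB.
  induction Ht; intros G1 EB; subst; simpl; eauto using Defs.typed.
  - destruct (Nat.ltb_spec x (length G1)); apply t_ax.
    + rewrite nth_error_app1 in * by auto. auto.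
    + rewrite nth_error_app2 in H by auto.
      rewrite !nth_error_app2 by lia. rewrite <- H. f_equal. lia.
  - apply t_arrI. apply (IHHt (s :: G1)); auto.
  - apply t_capI; auto. rewrite !ess_dlift. apply Rel_llift; auto.
Qed.

Lemma typed_dsubst G1 G2 s u b t : typed (G1 ++ s :: G2) b t -> typed G2 u s ->
  typed (G1 ++ G2) (dsubst (length G1) u b) t.
Proof.
  remember (G1 ++ s :: G2) as B eqn:EB; intros Ht Hu; revert G1 EB.
  induction Ht; intros G1 EB; subst; simpl; eauto using Defs.typed.
  - destruct (Nat.eqb_spec x (length G1)) as [->|Hne].
    + rewrite nth_error_app2, Nat.sub_diag in H by lia. injection H as <-.
      apply (typed_weaken nil G2 G1); auto.
    + destruct (Nat.ltb_spec (length G1) x); apply t_ax.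
      * rewrite nth_error_app2 in * by lia. rewrite <- H.
        replace (x - length G1) with (S (pred x - length G1)) by lia. reflexivity.
      * rewrite nth_error_app1 in * by lia. auto.
  - apply t_arrI. apply (IHHt (s0 :: G1)); auto.
  - apply t_capI; auto. rewrite !ess_dsubst. apply Rel_lsubst; auto.
Qed.

Lemma typed_beta_redex B s b u t :
  typed B (DApp (DLam s b) u) t -> typed B (dsubst 0 u b) t.
Proof.
  intros Ht; inversion Ht as [| | |? s' ? ? ? Hlam Hu| | | |]; subst.
  inversion Hlam; subst.
  apply (typed_dsubst nil B s'); auto.
Qed.

Lemma typed_pr1_redex B d1 d2 t : typed B (DPr1 (DPair d1 d2)) t -> typed B d1 t.
Proof. intros Ht; inversion Ht as [| | | | |? ? ? ? Hp| |]; subst; now inversion Hp. Qed.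

Lemma typed_pr2_redex B d1 d2 t : typed B (DPr2 (DPair d1 d2)) t -> typed B d2 t.
Proof. intros Ht; inversion Ht as [| | | | | |? ? ? ? Hp|]; subst; now inversion Hp. Qed.

Lemma typed_pstep B d d' t : typed B d t -> pstep d d' -> typed B d' t.
Proof.
  intros Ht P; revert B t Ht.
  induction P; intros B t0 Ht;
    eauto using typed_beta_redex, typed_pr1_redex, typed_pr2_redex;
    inversion Ht; subst; eauto using Defs.typed.
  apply t_capI; auto. rewrite H. apply Rel_refl.
Qed.

Hypothesis k_conv : k <> Syn.

Lemma dstep_ess_Rel B d d' t : typed B d t -> dstep d d' -> Rel k (ess d) (ess d').
Proof.
  intros Ht P; revert B t Ht.
  induction P; intros B t0 Ht; simpl.
  - rewrite ess_dsubst. apply Rel_lbeta; auto using lbeta.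
  - apply Rel_refl.
  - inversion Ht as [| | | | | |? ? ? ? Hp|]; subst.
    inversion Hp; auto.
  - inversion Ht; subst. apply Rel_LLam; eauto.
  - inversion Ht; subst. apply Rel_LAppl; eauto.
  - inversion Ht; subst. apply Rel_LAppr; eauto.
  - inversion Ht; subst; eauto.
  - apply Rel_refl.
  - inversion Ht; subst; eauto.
  - inversion Ht; subst; eauto.
  - inversion Ht; subst; eauto.
Qed.

Lemma typed_dstep B d d' t : typed B d t -> dstep d d' -> typed B d' t.
Proof.
  intros Ht P; revert B t Ht.
  induction P; intros B t0 Ht;
    eauto using typed_beta_redex, typed_pr1_redex, typed_pr2_redex;
    inversion Ht; subst; eauto using Defs.typed.
  - apply t_capI; auto.
    apply Rel_trans with (ess d); auto.
    apply Rel_sym. eapply dstep_ess_Rel; eauto.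
  - apply t_capI; auto.
    apply Rel_trans with (ess e); auto.
    eapply dstep_ess_Rel; eauto.
Qed.

End Typing.

Theorem mainTheorem10 (A : Type) (om : option A) (le : ty A -> ty A -> Prop)
  (HT : is_type_theory le) :
  (forall (B : list (ty A)) (d1 d2 : dterm A) (s : ty A),
      typed om le Syn B d1 s -> pstep d1 d2 -> typed om le Syn B d2 s) /\
  (forall k : rel_kind, k = Beta \/ k = BetaEta ->
    forall (B : list (ty A)) (d1 d2 : dterm A) (s : ty A),
      typed om le k B d1 s -> dstep d1 d2 -> typed om le k B d2 s).
Proof.
  split.
  - apply typed_pstep.
  - intros k Hk. apply typed_dstep. now destruct Hk as [-> | ->].
Qed.
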